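(* Let \[ W(\eta,\omega_G)=\tfrac12(\omega_G-\bar\omega_G)^TM(\omega_G-\bar\omega_G)+\mathbf{1}^T\Gamma\cos(\eta)-\mathbf{1}^T\Gamma\cos(\bar\eta)-(\Gamma\sin(\bar\eta))^T(\eta-\bar\eta). \] Then the time derivative of $W$ along a solution $(\eta,\omega_G)$ of $\dot\eta=B_S^T(\eta)\omega_G$, $M\dot\omega_G=-A\omega_G-B_G\Gamma\sin(\eta)+u$, initialized in a neighborhood of $(\bar\eta,\bar\omega_G)$ with $B_L\Gamma\sin(\eta(0))=B_L\Gamma\sin(\bar\eta)$, satisfies \[ \dot W=-(\omega_G-\bar\omega_G)^TA(\omega_G-\bar\omega_G)+(\omega_G-\bar\omega_G)^T(u-\bar u) \] on the interval of definition of the solution.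
   Context: A connected undirected graph with $n$ nodes and $m$ edges, nodes partitioned into $n_g$ generator and $n_\ell$ load nodes; $B$ is an incidence matrix partitioned row-wise as $B=\begin{bmatrix}B_G^T & B_L^T\end{bmatrix}^T$. $\Gamma=\mathrm{diag}(\gamma_k)$ is positive definite, $M,A$ positive definite diagonal. $\sin,\cos$ act elementwise, $\Omega=(-\frac{\pi}{2},\frac{\pi}{2})^m$, $\Gamma'(\eta)=\Gamma\,\mathrm{diag}(\cos(\eta_k))$, $B_S(\eta)=B_G\big(I-\Gamma'(\eta)B_L^T(B_L\Gamma'(\eta)B_L^T)^{-1}B_L\big)$, and $\mathbf{1}$ is the all-ones vector. $\bar u$ is a constant input and $(\bar\eta,\bar\omega_G)$ with $\bar\eta\in\Omega\cap\operatorname{im}B^T$, $\bar\omega_G=\mathbf{1}\omega^0$ ($\omega^0\in\mathbb{R}$) satisfies $0=B_S^T(\bar\eta)\bar\omega_G$ and $0=-A\bar\omega_G-B_G\Gamma\sin(\bar\eta)+\bar u$. *)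

From HB Require Import structures.
From mathcomp Require Import all_boot all_order all_algebra.
From mathcomp Require Import all_classical all_reals all_analysis.
Set Implicit Arguments. Unset Strict Implicit. Unset Printing Implicit Defensive.
Import Order.TTheory GRing.Theory Num.Theory.
Import numFieldNormedType.Exports.
Local Open Scope ring_scope.
Local Open Scope classical_set_scope.

Definition incidence_mx (R : nzRingType) (n m : nat) (B : 'M[R]_(n, m)) : Prop :=
  forall k : 'I_m, exists i j : 'I_n, [/\ i != j, B i k = 1, B j k = -1 &
    forall l : 'I_n, l != i -> l != j -> B l k = 0].

Definition inc_adj (R : nzRingType) (n m : nat) (B : 'M[R]_(n, m)) : rel 'I_n :=
  fun i j => (i != j) && [exists k : 'I_m, (B i k != 0) && (B j k != 0)].

Definition graph_connected (R : nzRingType) (n m : nat) (B : 'M[R]_(n, m)) : Prop :=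
  forall i j : 'I_n, connect (inc_adj B) i j.

Definition pos_diag_mx (R : numDomainType) (n : nat) (D : 'M[R]_n) : Prop :=
  is_diag_mx D /\ forall i, 0 < D i i.

Definition vsin (R : realType) (m : nat) (x : 'cV[R]_m) : 'cV[R]_m := map_mx sin x.
Definition vcos (R : realType) (m : nat) (x : 'cV[R]_m) : 'cV[R]_m := map_mx cos x.

Definition in_Omega (R : realType) (m : nat) (x : 'cV[R]_m) : Prop :=
  forall k, - (pi / 2) < x k 0 < pi / 2.

Definition Gammap (R : realType) (m : nat) (Gamma : 'M[R]_m) (eta : 'cV[R]_m)
  : 'M[R]_m := Gamma *m diag_mx (vcos eta)^T.

Definition B_S (R : realType) (ng nl m : nat) (BG : 'M[R]_(ng, m))
  (BL : 'M[R]_(nl, m)) (Gamma : 'M[R]_m) (eta : 'cV[R]_m) : 'M[R]_(ng, m) :=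
  let Gp := Gammap Gamma eta in
  BG *m (1%:M - Gp *m BL^T *m invmx (BL *m Gp *m BL^T) *m BL).

Definition ones (R : nzRingType) (k : nat) : 'cV[R]_k := const_mx 1.

Definition sc (R : nzRingType) (x : 'M[R]_1) : R := x 0 0.

Definition Wfun (R : realType) (ng m : nat) (M : 'M[R]_ng) (Gamma : 'M[R]_m) 
  (etab : 'cV[R]_m) (omb : 'cV[R]_ng) (eta : 'cV[R]_m) (om : 'cV[R]_ng) : R :=
  2^-1 * sc ((om - omb)^T *m M *m (om - omb))
  - sc ((ones R m)^T *m Gamma *m vcos eta)
  + sc ((ones R m)^T *m Gamma *m vcos etab)
  - sc ((Gamma *m vsin etab)^T *m (eta - etab)).

From HB Require Import structures.
From mathcomp Require Import all_boot all_order all_algebra.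
From mathcomp Require Import all_classical all_reals all_analysis.
From mathcomp Require Import lra.
Import Order.TTheory GRing.Theory Num.Theory.
Import numFieldNormedType.Exports.
Set Implicit Arguments. Unset Strict Implicit.
Local Open Scope ring_scope.
Local Open Scope classical_set_scope.

(* Along a solution, the load-flow vector B_L Γ sin η is conserved: its
   derivative is B_L Γ'(η) B_S(η)^T ω_G, and B_L Γ'(η) B_S(η)^T = 0 because
   B_L Γ'(η) B_L^T is invertible -- it is a grounded Laplacian of the connected
   graph with positive edge weights γ_k cos η_k on Ω.  The initial condition
   therefore gives B_L Γ (sin η - sin η̄) = 0 for all times, so B_S(η) acts as
   B_G on Γ (sin η - sin η̄), and the contribution of ω̄ = ω⁰ 1 drops out since
   1^T B_G = - 1^T B_L.  Differentiating W and substituting the dynamics and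
   the equilibrium equation for ū then leaves exactly the claimed expression. *)

Section EntrywiseDerivative.
Variable R : realType.

Definition entrywise_derive a b (f : R -> 'M[R]_(a, b)) (df : 'M[R]_(a, b)) t :=
  forall i j, is_derive t (1 : R) (fun s => f s i j) (df i j).

Variables (a b : nat) (t : R).
Implicit Types (f g : R -> 'M[R]_(a, b)) (df dg : 'M[R]_(a, b)).

Lemma is_derive_entrywise f df :
  is_derive t (1 : R) f df -> entrywise_derive f df t.
Proof.
move=> [fd <-] i j; rewrite (derive_mx fd) mxE.
by apply: derivableP; move/derivable_mxP: fd.
Qed.

Lemma entrywise_derive_cst (C : 'M[R]_(a, b)) : entrywise_derive (fun=> C) 0 t.
Proof. by move=> i j; rewrite mxE; exact: is_derive_cst. Qed.

Lemma entrywise_deriveD f g df dg : entrywise_derive f df t ->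
  entrywise_derive g dg t -> entrywise_derive (fun s => f s + g s) (df + dg) t.
Proof.
move=> fd gd i j; rewrite mxE.
under eq_fun do rewrite mxE.
exact: is_deriveD.
Qed.

Lemma entrywise_deriveN f df :
  entrywise_derive f df t -> entrywise_derive (fun s => - f s) (- df) t.
Proof.
move=> fd i j; rewrite mxE.
under eq_fun do rewrite mxE.
exact: is_deriveN.
Qed.

Lemma entrywise_deriveB f g df dg : entrywise_derive f df t ->
  entrywise_derive g dg t -> entrywise_derive (fun s => f s - g s) (df - dg) t.
Proof. by move=> fd gd; apply: entrywise_deriveD => //; exact: entrywise_deriveN. Qed.

Lemma entrywise_deriveZ (k : R) f df :
  entrywise_derive f df t -> entrywise_derive (fun s => k *: f s) (k *: df) t.
Proof.
move=> fd i j; rewrite mxE.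
under eq_fun do rewrite mxE.
exact: is_deriveZ.
Qed.

Lemma entrywise_deriveT f df :
  entrywise_derive f df t -> entrywise_derive (fun s => (f s)^T) df^T t.
Proof. by move=> fd i j; rewrite mxE; under eq_fun do rewrite mxE; exact: fd. Qed.

Lemma entrywise_derive_map (phi dphi : R -> R) f df :
  (forall x, is_derive x (1 : R) phi (dphi x)) -> entrywise_derive f df t ->
  entrywise_derive (fun s => map_mx phi (f s))
    (\matrix_(i, j) (dphi (f t i j) * df i j)) t.
Proof.
move=> phid fd i j; rewrite mxE.
have -> : (fun s => map_mx phi (f s) i j) = phi \o (fun s => f s i j).
  by apply/funext => s; rewrite mxE.
exact: is_derive1_comp.
Qed.

Lemma entrywise_deriveM c f (g : R -> 'M[R]_(b, c)) df (dg : 'M[R]_(b, c)) :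
  entrywise_derive f df t -> entrywise_derive g dg t ->
  entrywise_derive (fun s => f s *m g s) (df *m g t + f t *m dg) t.
Proof.
move=> fd gd i j.
have -> : (fun s => (f s *m g s) i j) =
    \sum_(k < b) ((fun s => f s i k) * (fun s => g s k j)).
  by apply/funext => s; rewrite fct_sumE mxE.
have -> : (df *m g t + f t *m dg) i j =
    \sum_(k < b) (f t i k *: dg k j + g t k j *: df i k).
  rewrite !mxE -big_split; apply: eq_bigr => k _.
  by rewrite /GRing.scale /= addrC [df i k * _]mulrC.
by apply: is_derive_sum => k; exact: is_deriveM.
Qed.

End EntrywiseDerivative.

Lemma is_derive_sc (R : realType) (f : R -> 'M[R]_1) df t :
  entrywise_derive f df t -> is_derive t (1 : R) (fun s => sc (f s)) (sc df).
Proof. by move=> /(_ 0 0). Qed.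

Section OneByOneScalar.
Variable R : nzRingType.
Implicit Types x y : 'M[R]_1.

Lemma scD x y : sc (x + y) = sc x + sc y. Proof. by rewrite /sc mxE. Qed.
Lemma scN x : sc (- x) = - sc x. Proof. by rewrite /sc mxE. Qed.
Lemma scB x y : sc (x - y) = sc x - sc y. Proof. by rewrite scD scN. Qed.
Lemma scZ (k : R) x : sc (k *: x) = k * sc x. Proof. by rewrite /sc mxE. Qed.
Lemma scT x : sc x^T = sc x. Proof. by rewrite /sc mxE. Qed.
Lemma sc0 : sc (0 : 'M[R]_1) = 0. Proof. by rewrite /sc mxE. Qed.

End OneByOneScalar.

Lemma is_derive0_const_on_interval (R : realType) (I : set R) (f : R -> R) :
  is_interval I -> (forall s, I s -> is_derive s (1 : R) f 0) ->
  {in I &, forall a b, f a = f b}.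
Proof.
move=> Iitv f'0.
suff le_eq a b : a <= b -> I a -> I b -> f a = f b.
  move=> a b /[!inE] Ia Ib; have [/ltW ba|ab] := ltP b a; last exact: le_eq.
  by rewrite (le_eq b a).
move=> ab Ia Ib.
have Iab x : x \in `[a, b]%R -> I x.
  by rewrite in_itv /= => /andP[ax xb]; apply: (Iitv a b) => //; rewrite ax xb.
have fd : {in `[a, b]%R, forall x, derivable f x 1}.
  by move=> x /Iab/f'0[].
have [c _] := MVT_segment ab (fun x x_ab => f'0 x (Iab x (subset_itv_oo_cc x_ab)))
  (derivable_within_continuous fd).
by rewrite mul0r => /eqP; rewrite subr_eq0 => /eqP.
Qed.

Section Incidence.
Variables (R : nzRingType) (n m : nat) (B : 'M[R]_(n, m)).
Hypothesis B_inc : incidence_mx B.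

Lemma row_mul_incidence (y : 'rV[R]_n) k : exists i j, [/\ i != j,
  forall l, l != i -> l != j -> B l k = 0 & (y *m B) 0 k = y 0 i - y 0 j].
Proof.
have [i [j [ij Bi Bj B0]]] := B_inc k; exists i, j; split=> //.
rewrite mxE (bigD1 i) //= (bigD1 j) 1?eq_sym //= big1 ?addr0.
  by rewrite Bi Bj mulr1 mulrN1.
by move=> l /andP[li lj]; rewrite B0 // mulr0.
Qed.

Lemma ones_tr_incidence : (ones R n)^T *m B = 0.
Proof.
apply/matrixP => i k; rewrite (ord1 i).
have [p [q [_ _ ->]]] := row_mul_incidence (ones R n)^T k.
by rewrite !mxE subrr.
Qed.

Hypothesis B_conn : graph_connected B.

Lemma row_ker_incidence_const (y : 'rV[R]_n) :
  y *m B = 0 -> forall i j, y 0 i = y 0 j.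
Proof.
move=> yB0.
have adj_eq i j : inc_adj B i j -> y 0 i = y 0 j.
  move=> /andP[ij /existsP[k /andP[Bi Bj]]].
  have [p [q [pq B0 yBk]]] := row_mul_incidence y k.
  have ypq : y 0 p = y 0 q by apply/eqP; rewrite -subr_eq0 -yBk yB0 mxE.
  have end_pq l : B l k != 0 -> (l == p) || (l == q).
    by apply: contraR => /norP[lp lq]; rewrite B0.
  by case/orP: (end_pq i Bi) ij => /eqP->; case/orP: (end_pq j Bj) => /eqP->;
    rewrite ?eqxx.
move=> i j; have /connectP[p ipath ->] := B_conn i j.
by elim: p i ipath => //= l p IHp i /andP[/adj_eq -> /IHp].
Qed.

End Incidence.

Lemma diag_form_eq0 (R : realFieldType) m (d w : 'rV[R]_m) :
  (forall k, 0 < d 0 k) -> w *m diag_mx d *m w^T = 0 -> w = 0.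
Proof.
move=> d_gt0 /(congr1 (fun x : 'M[R]_1 => x 0 0)).
rewrite mul_mx_diag mxE mxE; under eq_bigr do rewrite !mxE mulrAC -expr2.
move=> /psumr_eq0P wdw0; apply/matrixP => i k; rewrite (ord1 i) mxE.
have /eqP := wdw0 (fun l _ => mulr_ge0 (sqr_ge0 _) (ltW (d_gt0 l))) k isT.
by rewrite mulf_eq0 (gt_eqF (d_gt0 k)) orbF sqrf_eq0 => /eqP.
Qed.

Lemma grounded_laplacian_unitmx (R : realFieldType) ng nl m
    (B : 'M[R]_(ng + nl, m)) (d : 'rV[R]_m) :
  incidence_mx B -> graph_connected B -> (0 < ng)%N -> (forall k, 0 < d 0 k) ->
  dsubmx B *m diag_mx d *m (dsubmx B)^T \in unitmx.
Proof.
move=> B_inc B_conn ng_gt0 d_gt0; rewrite -row_free_unit.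
apply: inj_row_free => z zX0.
have zBL0 : z *m dsubmx B = 0.
  by apply: (diag_form_eq0 d_gt0); rewrite trmx_mul !mulmxA -2!(mulmxA z) zX0 mul0mx.
have yB0 : row_mx 0 z *m B = 0 by rewrite -{1}(vsubmxK B) mul_row_col mul0mx add0r.
apply/matrixP => i l; rewrite (ord1 i) mxE -(row_mxEr (0 : 'rV[R]_ng) z).
rewrite (row_ker_incidence_const B_inc B_conn yB0 _ (lshift nl (Ordinal ng_gt0))).
by rewrite row_mxEl mxE.
Qed.

Lemma ones_tr_usubmx_incidence (R : nzRingType) ng nl m (B : 'M[R]_(ng + nl, m)) :
  incidence_mx B -> (ones R ng)^T *m usubmx B = - ((ones R nl)^T *m dsubmx B).
Proof.
move=> /ones_tr_incidence; rewrite -[B in _ *m B]vsubmxK.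
have -> : (ones R (ng + nl))^T = row_mx (ones R ng)^T (ones R nl)^T.
  by apply/matrixP => i j; rewrite !mxE; case: splitP => k _; rewrite !mxE.
by rewrite mul_row_col => /eqP; rewrite addr_eq0 => /eqP.
Qed.

Section ReducedFlowMatrix.
Variables (R : realType) (ng nl m : nat).
Variables (BG : 'M[R]_(ng, m)) (BL : 'M[R]_(nl, m)) (Gamma : 'M[R]_m) (e : 'cV[R]_m).

Lemma B_S_mul_kernel (v : 'cV[R]_m) :
  BL *m v = 0 -> B_S BG BL Gamma e *m v = BG *m v.
Proof.
by move=> BLv0; rewrite /B_S -mulmxA mulmxBl mul1mx -!mulmxA BLv0 !mulmx0 subr0.
Qed.

Lemma Gammap_B_S_tr_eq0 :
  (Gammap Gamma e)^T = Gammap Gamma e ->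
  BL *m Gammap Gamma e *m BL^T \in unitmx ->
  BL *m Gammap Gamma e *m (B_S BG BL Gamma e)^T = 0.
Proof.
rewrite /B_S /=; move: (Gammap Gamma e) => Gp GpT X_unit.
have XT : (BL *m Gp *m BL^T)^T = BL *m Gp *m BL^T by rewrite !trmx_mul trmxK GpT mulmxA.
rewrite trmx_mul mulmxA linearB /= trmx1 !trmx_mul trmxK GpT trmx_inv XT.
by rewrite mulmxBr mulmx1 !mulmxA mulmxV // mul1mx subrr mul0mx.
Qed.

End ReducedFlowMatrix.

Lemma Gammap_diag (R : realType) m (g : 'rV[R]_m) e :
  Gammap (diag_mx g) e = diag_mx (\row_k (g 0 k * cos (e k 0))).
Proof. by rewrite /Gammap mulmx_diag; congr diag_mx; apply/rowP => k; rewrite !mxE. Qed.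

Lemma dsubmx_Gammap_B_S_tr_eq0 (R : realType) ng nl m (B : 'M[R]_(ng + nl, m))
    (g : 'rV[R]_m) (e : 'cV[R]_m) :
  incidence_mx B -> graph_connected B -> (forall k, 0 < g 0 k) -> in_Omega e ->
  dsubmx B *m Gammap (diag_mx g) e *m (B_S (usubmx B) (dsubmx B) (diag_mx g) e)^T = 0.
Proof.
move=> B_inc B_conn g_gt0 e_Omega; have [ng0|ng_gt0] := posnP ng.
  by apply/matrixP => i [j lt_j]; exfalso; move: lt_j; rewrite ng0.
apply: Gammap_B_S_tr_eq0; first by rewrite Gammap_diag tr_diag_mx.
rewrite Gammap_diag; apply: grounded_laplacian_unitmx => // k.
by rewrite mxE mulr_gt0 //; apply: cos_gt0_pihalf; exact: e_Omega.
Qed.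

Section TrigonometricVectors.
Variables (R : realType) (m : nat) (eta : R -> 'cV[R]_m) (deta : 'cV[R]_m) (t : R).
Hypothesis eta_d : entrywise_derive eta deta t.

Lemma entrywise_derive_vsin :
  entrywise_derive (fun s => vsin (eta s)) (diag_mx (vcos (eta t))^T *m deta) t.
Proof.
have -> : diag_mx (vcos (eta t))^T *m deta =
    \matrix_(i, j) (cos (eta t i j) * deta i j).
  by apply/matrixP => i j; rewrite mul_diag_mx !mxE (ord1 j).
exact: entrywise_derive_map (@is_derive_sin R) eta_d.
Qed.

Lemma entrywise_derive_vcos :
  entrywise_derive (fun s => vcos (eta s)) (- (diag_mx (vsin (eta t))^T *m deta)) t.
Proof.
have -> : - (diag_mx (vsin (eta t))^T *m deta) =
    \matrix_(i, j) (- sin (eta t i j) * deta i j).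
  by apply/matrixP => i j; rewrite mul_diag_mx !mxE (ord1 j) mulNr.
exact: entrywise_derive_map (@is_derive_cos R) eta_d.
Qed.

End TrigonometricVectors.

Lemma ones_tr_diag_mul_diag (R : comNzRingType) m (g v : 'rV[R]_m) :
  (ones R m)^T *m diag_mx g *m diag_mx v = (diag_mx g *m v^T)^T.
Proof. by apply/rowP => k; rewrite !mul_mx_diag mul_diag_mx !mxE mul1r mulrC. Qed.

Lemma Wfun_derive (R : realType) ng m (M : 'M[R]_ng) (g : 'rV[R]_m)
    (etab : 'cV[R]_m) (omb : 'cV[R]_ng) (eta : R -> 'cV[R]_m) (om : R -> 'cV[R]_ng)
    (deta : 'cV[R]_m) (dom : 'cV[R]_ng) (t : R) :
  M^T = M -> is_derive t (1 : R) eta deta -> is_derive t (1 : R) om dom ->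
  is_derive t (1 : R) (fun s => Wfun M (diag_mx g) etab omb (eta s) (om s))
    (sc ((om t - omb)^T *m M *m dom)
     + sc ((diag_mx g *m (vsin (eta t) - vsin etab))^T *m deta)).
Proof.
move=> MT /is_derive_entrywise eta_d /is_derive_entrywise om_d.
have x_d := entrywise_deriveB om_d (entrywise_derive_cst t omb).
have Q_d := entrywise_deriveM (entrywise_deriveM (entrywise_deriveT x_d)
  (entrywise_derive_cst t M)) x_d.
have C_d := entrywise_deriveM (entrywise_derive_cst t ((ones R m)^T *m diag_mx g))
  (entrywise_derive_vcos eta_d).
have L_d := entrywise_deriveM (entrywise_derive_cst t (diag_mx g *m vsin etab)^T)
  (entrywise_deriveB eta_d (entrywise_derive_cst t etab)).
have W_d := entrywise_deriveB (entrywise_deriveD (entrywise_deriveB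
  (entrywise_deriveZ 2^-1 Q_d) C_d) (entrywise_derive_cst t
  ((ones R m)^T *m diag_mx g *m vcos etab))) L_d.
have -> : (fun s => Wfun M (diag_mx g) etab omb (eta s) (om s)) = fun s =>
    sc (2^-1 *: ((om s - omb)^T *m M *m (om s - omb))
        - (ones R m)^T *m diag_mx g *m vcos (eta s)
        + (ones R m)^T *m diag_mx g *m vcos etab
        - (diag_mx g *m vsin etab)^T *m (eta s - etab)).
  by apply/funext => s; rewrite /Wfun scB scD scB scZ.
apply: is_derive_eq; first exact: (is_derive_sc W_d).
have quad_sym : sc (dom^T *m M *m (om t - omb)) = sc ((om t - omb)^T *m M *m dom).
  by rewrite -scT !trmx_mul trmxK MT mulmxA.
have cos_term : (ones R m)^T *m diag_mx g *m (diag_mx (vsin (eta t))^T *m deta)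
    = (diag_mx g *m vsin (eta t))^T *m deta.
  by rewrite mulmxA ones_tr_diag_mul_diag trmxK.
have sin_diff : sc ((diag_mx g *m (vsin (eta t) - vsin etab))^T *m deta) =
    sc ((diag_mx g *m vsin (eta t))^T *m deta) - sc ((diag_mx g *m vsin etab)^T *m deta).
  by rewrite mulmxBr linearB /= mulmxBl scB.
rewrite !(subr0, mul0mx, add0r, mulmx0, addr0) mulmxN cos_term.
rewrite !(scB, scN, scZ) scD quad_sym sin_diff; lra.
Qed.

Lemma dsubmx_Gamma_vsin_invariant (R : realType) ng nl m (B : 'M[R]_(ng + nl, m))
    (g : 'rV[R]_m) (I : set R) (eta : R -> 'cV[R]_m) (om : R -> 'cV[R]_ng) :
  incidence_mx B -> graph_connected B -> (forall k, 0 < g 0 k) -> is_interval I ->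
  (forall t, I t -> in_Omega (eta t)) ->
  (forall t, I t -> is_derive t (1 : R) eta
     ((B_S (usubmx B) (dsubmx B) (diag_mx g) (eta t))^T *m om t)) ->
  {in I &, forall s t,
    dsubmx B *m diag_mx g *m vsin (eta s) = dsubmx B *m diag_mx g *m vsin (eta t)}.
Proof.
move=> B_inc B_conn g_gt0 Iitv eta_Omega eta_d s t Is It.
apply/matrixP => i j; apply: (is_derive0_const_on_interval
  (f := fun r => (dsubmx B *m diag_mx g *m vsin (eta r)) i j) Iitv) => // r Ir.
have := entrywise_deriveM (entrywise_derive_cst r (dsubmx B *m diag_mx g))
  (entrywise_derive_vsin (is_derive_entrywise (eta_d r Ir))).
rewrite mul0mx add0r !mulmxA -[dsubmx B *m diag_mx g *m _]mulmxA.
rewrite -/(Gammap (diag_mx g) (eta r)) dsubmx_Gammap_B_S_tr_eq0 ?mul0mx //.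
  by move=> /(_ i j); rewrite mxE.
exact: eta_Omega.
Qed.

Lemma pairing_B_S_tr_kernel (R : realType) ng nl m (B : 'M[R]_(ng + nl, m)) (om0 : R)
    (Gamma : 'M[R]_m) (e v : 'cV[R]_m) (om : 'cV[R]_ng) :
  incidence_mx B -> dsubmx B *m v = 0 ->
  sc (v^T *m ((B_S (usubmx B) (dsubmx B) Gamma e)^T *m om)) =
  sc ((om - om0 *: ones R ng)^T *m (usubmx B *m v)).
Proof.
move=> B_inc BLv0.
rewrite mulmxA -trmx_mul B_S_mul_kernel // -scT trmx_mul trmxK.
rewrite linearB /= mulmxBl scB.
suff -> : (om0 *: ones R ng)^T *m (usubmx B *m v) = 0 by rewrite sc0 subr0.
rewrite linearZ /= -scalemxAl mulmxA ones_tr_usubmx_incidence //.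
by rewrite mulNmx -mulmxA BLv0 mulmx0 oppr0 scaler0.
Qed.

Theorem proposition5 (R : realType) (ng nl m : nat)
  (B : 'M[R]_(ng + nl, m)) (Gamma : 'M[R]_m) (M A : 'M[R]_ng)
  (ubar : 'cV[R]_ng) (etab : 'cV[R]_m) (om0 : R)
  (I : set R) (eta : R -> 'cV[R]_m) (om : R -> 'cV[R]_ng)
  (u : R -> 'cV[R]_ng) :
  incidence_mx B -> graph_connected B ->
  pos_diag_mx Gamma -> pos_diag_mx M -> pos_diag_mx A ->
  let BG := usubmx B in
  let BL := dsubmx B in
  let omb := om0 *: ones R ng in
  in_Omega etab -> (exists v : 'cV[R]_(ng + nl), etab = B^T *m v) ->
  (B_S BG BL Gamma etab)^T *m omb = 0 ->
  0 = - (A *m omb) - BG *m Gamma *m vsin etab + ubar ->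
  open I -> is_interval I -> I 0 ->
  (forall t, I t -> in_Omega (eta t)) ->
  (forall t, I t -> is_derive t 1 eta ((B_S BG BL Gamma (eta t))^T *m om t)) ->
  (forall t, I t -> exists2 dom : 'cV[R]_ng, is_derive t 1 om dom &
       M *m dom = - (A *m om t) - BG *m Gamma *m vsin (eta t) + u t) ->
  BL *m Gamma *m vsin (eta 0) = BL *m Gamma *m vsin etab ->
  forall t, I t ->
    is_derive t 1 (fun s => Wfun M Gamma etab omb (eta s) (om s))
      (- sc ((om t - omb)^T *m A *m (om t - omb))
       + sc ((om t - omb)^T *m (u t - ubar))).
Proof.
move=> B_inc B_conn [/diag_mxP[g ->] Gamma_pos] [/diag_mxP[mu ->] _] _ BG BL omb
  _ _ _ ubarE _ Iitv I0 eta_Omega eta_d om_d init t It.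
have g_gt0 k : 0 < g 0 k by have := Gamma_pos k; rewrite mxE eqxx mulr1n.
have [dom om_dt M_dom] := om_d t It.
have BLv0 : BL *m (diag_mx g *m (vsin (eta t) - vsin etab)) = 0.
  by rewrite mulmxA mulmxBr -init (dsubmx_Gamma_vsin_invariant B_inc B_conn g_gt0
    Iitv eta_Omega eta_d (mem_set It) (mem_set I0)) subrr.
apply: is_derive_eq (Wfun_derive g etab omb (tr_diag_mx mu) (eta_d t It) om_dt) _.
rewrite /omb (pairing_B_S_tr_kernel om0) // -!mulmxA -scD -mulmxDr M_dom.
rewrite -scN -scD -[- (_^T *m _)]mulmxN -mulmxDr.
congr (sc (_ *m _)).
have -> : ubar = A *m (om0 *: ones R ng) + BG *m diag_mx g *m vsin etab.
  apply: (addrI (- (A *m omb) - BG *m diag_mx g *m vsin etab)).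
  by rewrite -ubarE -opprD addNr.
rewrite !mulmxBr !mulmxA.
move: (A *m om t) (A *m (om0 *: ones R ng)) (BG *m diag_mx g *m vsin (eta t))
  (BG *m diag_mx g *m vsin etab) (u t) => a c s b w.
by apply/matrixP => i j; rewrite !mxE; lra.
Qed.
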